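(* Let $G$ be a topological group. Then $G$ is $\alpha_{1.5}$ if and only if $G$ is $\alpha_1$.
   Context: Convention: a ''sequence'' is a countably infinite set. A countably infinite set $A$ in a topological space $X$ converges to $x\in X$ if $x\notin A$ and every neighborhood of $x$ contains all but finitely many elements of $A$ (equivalently, some or every bijective enumeration of $A$ converges to $x$ with no term equal to $x$). A topological space $X$ is $\alpha_1$ (respectively $\alpha_{1.5}$) if for each $x\in X$ and all pairwise disjoint sequences $S_1,S_2,\dots\subseteq X$, each converging to $x$, there is a sequence $S\subseteq\bigcup_n S_n$ converging to $x$ such that $S_n\setminus S$ is finite for all $n$ (respectively, for infinitely many $n$). *)

From HB Require Import structures.
From mathcomp Require Import all_boot all_order.
From mathcomp Require Import all_classical topology.
Set Implicit Arguments. Unset Strict Implicit. Unset Printing Implicit Defensive.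
Local Open Scope classical_set_scope.

Definition is_topological_group (T : topologicalType)
  (mul : T -> T -> T) (inv : T -> T) (e : T) : Prop :=
  [/\ (forall x y z, mul x (mul y z) = mul (mul x y) z),
      (forall x, mul e x = x /\ mul x e = x),
      (forall x, mul (inv x) x = e /\ mul x (inv x) = e),
      continuous (fun p : T * T => mul p.1 p.2) &
      continuous inv].

Definition is_sequence (T : Type) (A : set T) : Prop :=
  countable A /\ infinite_set A.

Definition seq_converges (T : topologicalType) (A : set T) (x : T) : Prop :=
  is_sequence A /\ ~ A x /\ (forall U, nbhs x U -> finite_set (A `\` U)).

Definition pairwise_disjoint_fam (T : Type) (S : nat -> set T) : Prop :=
  forall m n, m <> n -> S m `&` S n = set0.

Definition alpha1 (T : topologicalType) : Prop :=
  forall (x : T) (S : nat -> set T),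
    (forall n, seq_converges (S n) x) -> pairwise_disjoint_fam S ->
    exists S0 : set T, S0 `<=` \bigcup_n S n /\ seq_converges S0 x /\
      (forall n, finite_set (S n `\` S0)).

Definition alpha1_5 (T : topologicalType) : Prop :=
  forall (x : T) (S : nat -> set T),
    (forall n, seq_converges (S n) x) -> pairwise_disjoint_fam S ->
    exists S0 : set T, S0 `<=` \bigcup_n S n /\ seq_converges S0 x /\
      infinite_set [set n | finite_set (S n `\` S0)].

From mathcomp Require Import all_boot all_order.
From mathcomp Require Import all_classical topology.
Set Implicit Arguments. Unset Strict Implicit. Unset Printing Implicit Defensive.
Local Open Scope classical_set_scope.

(* Only α1.5 ⇒ α1 needs the group structure.  Enumerate the disjoint sequences
   S_m converging to x as f_{m,k}, fix one more sequence b converging to x, and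
   form the perturbed points p_{i,m,k} = f_{m,k} x⁻¹ b_{i,m,k}, which converge to
   x x⁻¹ x = x.  For each i the sequence P_i = {p_{i,m,k} | m ≤ i} converges to
   x, and choosing the b_{i,m,k} injectively and generically makes the P_i
   pairwise disjoint.  α1.5 yields a convergent C almost containing P_i for
   infinitely many i, hence for some i_m ≥ m for every m.  Then
   f_{m,k} = p_{i_m,m,k} b_{i_m,m,k}⁻¹ x, so the f_{m,k} whose perturbation lies
   in C form a sequence converging to x that almost contains every S_m. *)

Lemma countable_infinite_enum (T : Type) (A : set T) :
  countable A -> infinite_set A ->
  exists f : nat -> T, [/\ injective f, forall n, A (f n) & A `<=` range f].
Proof.
move=> cA iA.
have /card_esym/card_bijP[g [g' gK g'K]] := eq_card_nat cA iA.
pose s (n : nat) : [set: nat] := SigSub (mem_set (I : [set: nat] n)).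
exists (fun n => val (g (s n))); split.
- by move=> m n /val_inj /(can_inj gK) /(congr1 val).
- by move=> n; exact: set_valP.
- move=> y Ay; pose z : A := SigSub (mem_set Ay).
  exists (val (g' z)) => //.
  have -> : s (val (g' z)) = g' z by apply: val_inj.
  by rewrite g'K.
Qed.

Lemma nat_rec_choice (T : Type) (x0 : T) (P : nat -> (nat -> T) -> T -> Prop) :
  (forall n g, exists y, P n g y) ->
  exists b : nat -> T, forall n, P n (fun j => if (j < n)%N then b j else x0) (b n).
Proof.
move=> exP; have [step stepP] := choice (fun ng : nat * (nat -> T) => exP ng.1 ng.2).
pose fix hist n : seq T :=
  if n is n'.+1 then rcons (hist n') (step (n', nth x0 (hist n'))) else [::].
exists (fun n => step (n, nth x0 (hist n))) => n.
suff -> : (fun j => if (j < n)%N then step (j, nth x0 (hist j)) else x0) =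
          nth x0 (hist n) by exact: (stepP (n, _)).
have size_hist m : size (hist m) = m by elim: m => //= m IH; rewrite size_rcons IH.
apply: funext => j; elim: n => [|n IH] /=; first by rewrite nth_nil.
rewrite nth_rcons size_hist -IH ltnS leq_eqVlt.
by case: ltngtP => [jn|//|->]; rewrite ?ltnn ?eqxx //= ltnNge ltnW.
Qed.

Lemma injective_nat_lt (T : Type) (g : nat -> T) :
  (forall m n, (m < n)%N -> g n <> g m) -> injective g.
Proof.
move=> gP m n E; apply/eqP; case: ltngtP => // mn; exfalso.
  exact: gP mn (esym E).
exact: gP mn E.
Qed.

Lemma injective_choice_avoid_nat (T T' : Type) (Y : set T) (h : nat -> T -> T')
    (z : T') :
  infinite_set Y -> (forall n, injective (h n)) ->
  exists b : nat -> T, [/\ forall n, Y (b n), injective b,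
    injective (fun n => h n (b n)) & forall n, h n (b n) <> z].
Proof.
move=> iY ih; have [y0 _] := infinite_setN0 iY.
pose P n (g : nat -> T) y := [/\ Y y, h n y <> z &
  forall j, (j < n)%N -> y <> g j /\ h n y <> h j (g j)].
have P_step n g : exists y, P n g y.
  have finite_h B : finite_set B -> finite_set (h n @^-1` B).
    by apply: finite_preimage => y1 y2 _ _; exact: ih.
  have fB : finite_set (g @` `I_n `|` h n @^-1` ((fun j => h j (g j)) @` `I_n)
                        `|` h n @^-1` [set z]).
    rewrite !finite_setU; split; [split|].
    - exact: finite_image.
    - exact/finite_h/finite_image.
    - exact/finite_h/finite_set1.
  have [y [Yy nBy]] := infinite_setN0 (infinite_setD iY fB).
  exists y; split=> // [hyz|j jn]; first by apply: nBy; right.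
  by split=> E; apply: nBy; left; [left|right]; exists j => //; rewrite E.
have [b bP] := nat_rec_choice y0 P_step.
have b_lt n j : (j < n)%N -> b n <> b j /\ h n (b n) <> h j (b j).
  by move=> jn; case: (bP n) => _ _ /(_ j jn); rewrite jn.
exists b; split.
- by move=> n; case: (bP n).
- by apply: injective_nat_lt => m n /(b_lt n m)[].
- by apply: injective_nat_lt => m n /(b_lt n m)[].
- by move=> n; case: (bP n).
Qed.

Lemma injective_choice_avoid (I : countType) (T T' : Type) (Y : set T)
    (h : I -> T -> T') (z : T') :
  infinite_set Y -> (forall i, injective (h i)) ->
  exists b : I -> T, [/\ forall i, Y (b i), injective b,
    injective (fun i => h i (b i)) & forall i, h i (b i) <> z].
Proof.
move=> iY ih; have [y0 _] := infinite_setN0 iY.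
have [[i0 _]|noI] := pselect (exists i : I, True); last first.
  by exists (fun=> y0); split=> // i; exfalso; apply: noI; exists i.
pose hn n := h (odflt i0 (unpickle n)).
have [|bn [Ybn bn_inj hbn_inj hbnz]] := @injective_choice_avoid_nat _ _ Y hn z iY.
  by move=> n; exact: ih.
have hnE i : hn (pickle i) = h i by rewrite /hn pickleK.
exists (bn \o pickle); split=> //=.
- exact: inj_comp bn_inj (pcan_inj pickleK).
- by move=> i j; rewrite -[h i]hnE -[h j]hnE => /hbn_inj /(pcan_inj pickleK).
- by move=> i; rewrite -hnE.
Qed.

Definition cofin_cvg (I : Type) (T : topologicalType) (D : set I) (g : I -> T)
    (x : T) : Prop :=
  forall U, nbhs x U -> finite_set (D `&` g @^-1` ~` U).

Section CofiniteConvergence.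
Variables (I : Type) (T : topologicalType).
Implicit Types (D : set I) (g : I -> T) (x : T).

Lemma cofin_cvg_cst D x : cofin_cvg D (fun=> x) x.
Proof.
move=> U /nbhs_singleton Ux; rewrite (_ : _ `&` _ = set0) //.
by apply/seteqP; split=> // i [].
Qed.

Lemma eq_cofin_cvg D g g' x : g =1 g' -> cofin_cvg D g x -> cofin_cvg D g' x.
Proof. by move=> /funext <-. Qed.

Lemma cofin_cvg_sub D D' g x : D' `<=` D -> cofin_cvg D g x -> cofin_cvg D' g x.
Proof. by move=> D'D gx U /gx; apply: sub_finite_set => i [/D'D]. Qed.

Lemma cofin_cvg_bigcup (J : Type) (K : set J) (D : J -> set I) g x :
  finite_set K -> (forall j, K j -> cofin_cvg (D j) g x) ->
  cofin_cvg (\bigcup_(j in K) D j) g x.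
Proof.
move=> fK gx U xU; rewrite setI_bigcupl.
by apply: bigcup_finite => // j Kj; exact: gx.
Qed.

Lemma cofin_cvg_pair (T' : topologicalType) D g (g' : I -> T') x (x' : T') :
  cofin_cvg D g x -> cofin_cvg D g' x' ->
  cofin_cvg D (fun i => (g i, g' i)) (x, x').
Proof.
move=> gx gx' U [[V V'] /= [xV xV'] VU].
apply: (sub_finite_set (B := (D `&` g @^-1` ~` V) `|` (D `&` g' @^-1` ~` V')));
  last by rewrite finite_setU; split; [exact: gx | exact: gx'].
move=> i [Di /= nU]; have [Vi|] := pselect (V (g i)); last by left.
have [V'i|] := pselect (V' (g' i)); last by right.
by exfalso; apply: nU; apply: (VU (g i, g' i)).
Qed.

Lemma cofin_cvg_comp (T' : topologicalType) (phi : T -> T') D g x :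
  {for x, continuous phi} -> cofin_cvg D g x -> cofin_cvg D (phi \o g) (phi x).
Proof. by move=> phix gx U /phix; exact: gx. Qed.

Lemma seq_converges_cofin_cvg (A : set T) D g x :
  seq_converges A x -> injective g -> g @` D `<=` A -> cofin_cvg D g x.
Proof.
move=> [_ [_ Ax]] g_inj gDA U xU.
apply: (sub_finite_set _ (finite_preimage (fun i j _ _ => @g_inj i j) (Ax U xU))).
by move=> i [Di nU]; split=> //; apply: gDA; exists i.
Qed.

Lemma cofin_cvg_seq_converges D g x :
  countable D -> infinite_set (g @` D) -> ~ (g @` D) x -> cofin_cvg D g x ->
  seq_converges (g @` D) x.
Proof.
move=> cD igD gDx gx; split; [split|split] => //.
- exact: card_le_trans (card_image_le g D) cD.
- move=> U xU; apply: (sub_finite_set _ (finite_image g (gx U xU))).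
  by move=> _ [[i Di <-] nU]; exists i.
Qed.

End CofiniteConvergence.

Lemma disjoint_family_enum (T : Type) (S : nat -> set T) :
  (forall m, is_sequence (S m)) -> pairwise_disjoint_fam S ->
  exists F : nat * nat -> T, [/\ injective F, forall mk, S mk.1 (F mk) &
    forall m y, S m y -> exists k, F (m, k) = y].
Proof.
move=> Sseq Sd.
have /choice[f fP] := fun m => countable_infinite_enum (Sseq m).1 (Sseq m).2.
have f_S m k : S m (f m k) by case: (fP m) => _ + _; apply.
exists (fun mk => f mk.1 mk.2); split=> [[m k] [m' k'] /= E||m y Smy].
- have [mm'|/eqP mm'] := eqVneq m m'.
    by subst m'; case: (fP m) => f_inj _ _; rewrite (f_inj k k' E).
  have : (S m `&` S m') (f m k) by split; [exact: f_S | rewrite E; exact: f_S].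
  by rewrite Sd.
- by move=> mk; exact: f_S.
- by case: (fP m) => _ _ /(_ y Smy)[k _ <-]; exists k.
Qed.

Lemma infinite_nat_unbounded (A : set nat) :
  infinite_set A -> forall m, exists2 n, A n & (m <= n)%N.
Proof.
move=> iA m; apply: contrapT => noAn; apply: iA.
apply: (sub_finite_set _ (finite_II m)) => n An /=.
by rewrite ltnNge; apply/negP => mn; apply: noAn; exists n.
Qed.

Lemma alpha1_alpha1_5 (T : topologicalType) : alpha1 T -> alpha1_5 T.
Proof.
move=> H x S Sc Sd; have [S0 [S0S [S0x S0fin]]] := H x S Sc Sd.
exists S0; split=> //; split=> //.
by apply: (sub_infinite_set _ infinite_nat) => n _; exact: S0fin.
Qed.

Section TopologicalGroup.
Variables (T : topologicalType) (mul : T -> T -> T) (inv : T -> T) (e : T).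
Hypothesis hG : is_topological_group mul inv e.

Lemma mulI (u : T) : injective (mul u).
Proof.
case: hG => mulA mul1 mulV _ _ y1 y2 E.
by rewrite -(mul1 y1).1 -(mul1 y2).1 -!(mulV u).1 -!mulA E.
Qed.

Lemma mulK (y x : T) : mul (mul y x) (inv x) = y.
Proof. by case: hG => mulA mul1 mulV _ _; rewrite -mulA (mulV x).2 (mul1 y).2. Qed.

Lemma mulKV (y x : T) : mul (mul y (inv x)) x = y.
Proof. by case: hG => mulA mul1 mulV _ _; rewrite -mulA (mulV x).1 (mul1 y).2. Qed.

Lemma cofin_cvg_mul (I : Type) (D : set I) (g g' : I -> T) (a a' : T) :
  cofin_cvg D g a -> cofin_cvg D g' a' ->
  cofin_cvg D (fun i => mul (g i) (g' i)) (mul a a').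
Proof.
case: hG => _ _ _ mul_cont _ ga ga'.
exact: cofin_cvg_comp (mul_cont (a, a')) (cofin_cvg_pair ga ga').
Qed.

Lemma cofin_cvg_inv (I : Type) (D : set I) (g : I -> T) (a : T) :
  cofin_cvg D g a -> cofin_cvg D (fun i => inv (g i)) (inv a).
Proof.
by move=> ga; case: hG => _ _ _ _ inv_cont; exact: cofin_cvg_comp (inv_cont a) ga.
Qed.

End TopologicalGroup.

Section Diagonal.
Variables (T : topologicalType) (mul : T -> T -> T) (inv : T -> T) (e : T).
Hypothesis hG : is_topological_group mul inv e.
Variables (x : T) (S : nat -> set T) (Y : set T).
Hypotheses (Sx : forall n, seq_converges (S n) x) (Yx : seq_converges Y x).
Variable F : nat * nat -> T.
Hypotheses (F_inj : injective F) (F_S : forall mk, S mk.1 (F mk))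
  (F_onto : forall m y, S m y -> exists k, F (m, k) = y).
Variable b : nat * (nat * nat) -> T.
Hypotheses (b_Y : forall t, Y (b t)) (b_inj : injective b).

Definition perturb (t : nat * (nat * nat)) : T := mul (mul (F t.2) (inv x)) (b t).

Hypotheses (perturb_inj : injective perturb) (perturb_neq : forall t, perturb t <> x).

Definition perturb_seq (i : nat) : set T :=
  (fun mk => perturb (i, mk)) @` [set mk | (mk.1 <= i)%N].

Lemma cofin_cvg_F i : cofin_cvg [set mk | (mk.1 <= i)%N] F x.
Proof.
apply: (@cofin_cvg_sub _ _ (\bigcup_(m in `I_i.+1) [set mk | mk.1 = m])).
  by move=> mk /= mki; exists mk.1.
apply: cofin_cvg_bigcup (finite_II _) _ => m _.
by apply: seq_converges_cofin_cvg (Sx m) F_inj _ => _ [mk /= <- <-].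
Qed.

Lemma perturb_seq_converges i : seq_converges (perturb_seq i) x.
Proof.
apply: cofin_cvg_seq_converges.
- exact: countableP.
- apply: (sub_infinite_set (A := (fun k => perturb (i, (0, k))) @` setT)).
    by move=> _ [k _ <-]; exists (0, k).
  by rewrite (eq_finite_set (inj_card_eq _)) //; [exact: infinite_nat |
    move=> k k' _ _ /perturb_inj[]].
- by move=> [mk _ /perturb_neq].
- rewrite -[x in cofin_cvg _ _ x](mulKV hG x x).
  apply: (cofin_cvg_mul (g := fun mk => mul (F mk) (inv x))
    (g' := fun mk => b (i, mk)) hG); last first.
    by apply: seq_converges_cofin_cvg Yx _ _ => [t t' /b_inj[->]|_ [mk _ <-]].
  by apply: (cofin_cvg_mul hG (cofin_cvg_F i)); exact: cofin_cvg_cst.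
Qed.

Lemma perturb_seq_disjoint : pairwise_disjoint_fam perturb_seq.
Proof.
move=> i j ij; apply/seteqP; split=> // _ [[mk _ <-] [mk' _ /perturb_inj[]]].
by move=> ji _; apply: ij.
Qed.

Variables (C : set T) (im : nat -> nat).
Hypotheses (Cx : seq_converges C x) (im_ge : forall m, (m <= im m)%N)
  (im_fin : forall m, finite_set (perturb_seq (im m) `\` C)).

Definition diag_selection : set T := F @` [set mk | C (perturb (im mk.1, mk))].

Lemma diag_selection_sub : diag_selection `<=` \bigcup_n S n.
Proof. by move=> _ [mk _ <-]; exists mk.1. Qed.

Lemma finite_S_diag_selection m : finite_set (S m `\` diag_selection).
Proof.
pose q k := perturb (im m, (m, k)).
apply: (sub_finite_set
  (B := (fun k => F (m, k)) @` (q @^-1` (perturb_seq (im m) `\` C)))).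
  move=> y [/F_onto[k <-] ndiag]; exists k => //; split.
    by exists (m, k) => //=; exact: im_ge.
  by move=> Cqk; apply: ndiag; exists (m, k).
apply/finite_image/finite_preimage => [k k' _ _ /perturb_inj[] //|].
exact: im_fin.
Qed.

Lemma perturbK t : mul (mul (perturb t) (inv (b t))) x = F t.2.
Proof. by rewrite /perturb (mulK hG) (mulKV hG). Qed.

Lemma diag_selection_converges : seq_converges diag_selection x.
Proof.
pose E := [set mk | C (perturb (im mk.1, mk))].
apply: cofin_cvg_seq_converges.
- exact: countableP.
- apply: (sub_infinite_set (A := S 0 `\` (S 0 `\` diag_selection))).
    by move=> y [S0y ndiag]; apply: contrapT => ny; apply: ndiag.
  exact: infinite_setD (Sx 0).1.2 (finite_S_diag_selection 0).
- by move=> [mk _ Fx]; apply: (Sx mk.1).2.1; rewrite -Fx.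
apply: (@eq_cofin_cvg _ _ _ (fun mk => mul (mul (perturb (im mk.1, mk))
  (inv (b (im mk.1, mk)))) x)); first by move=> mk; rewrite perturbK.
have p'x : cofin_cvg E (fun mk => perturb (im mk.1, mk)) x.
  apply: seq_converges_cofin_cvg Cx _ _ => [mk mk' /perturb_inj[_ ->] //|].
  by move=> _ [mk ? <-].
have b'x : cofin_cvg E (fun mk => b (im mk.1, mk)) x.
  apply: seq_converges_cofin_cvg Yx _ _ => [mk mk' /b_inj[_ ->] //|].
  by move=> _ [mk _ <-].
rewrite -[x in cofin_cvg _ _ x](mulKV hG x x).
exact: (cofin_cvg_mul hG (cofin_cvg_mul hG p'x (cofin_cvg_inv hG b'x))
  (@cofin_cvg_cst _ _ E x)).
Qed.

End Diagonal.

Lemma alpha1_5_alpha1 (T : topologicalType) (mul : T -> T -> T) (inv : T -> T)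
    (e : T) :
  is_topological_group mul inv e -> alpha1_5 T -> alpha1 T.
Proof.
move=> hG H x S Sx Sd.
have [F [F_inj F_S F_onto]] := disjoint_family_enum (fun m => (Sx m).1) Sd.
have [b [b_Y b_inj perturb_inj perturb_neq]] :=
  injective_choice_avoid (h := fun t : nat * (nat * nat) => mul (mul (F t.2) (inv x)))
    x (Sx 0).1.2 (fun t => mulI hG (u := _)).
have P_cvg := perturb_seq_converges hG Sx (Sx 0) F_inj F_S b_Y b_inj
  perturb_inj perturb_neq.
have [C [_ [Cx Cinf]]] := H x _ P_cvg (perturb_seq_disjoint perturb_inj).
have /choice[im imP] : forall m, exists i,
    finite_set (perturb_seq mul inv x F b i `\` C) /\ (m <= i)%N.
  by move=> m; have [i ? ?] := infinite_nat_unbounded Cinf m; exists i.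
have im_fin m := (imP m).1; have im_ge m := (imP m).2.
exists (diag_selection mul inv x F b C im); split; [|split].
- exact: (diag_selection_sub F_S).
- exact: (diag_selection_converges hG Sx (Sx 0) F_S F_onto b_Y b_inj
    perturb_inj Cx im_ge im_fin).
- exact: (finite_S_diag_selection F_onto perturb_inj im_ge im_fin).
Qed.

Theorem theorem1p2 (T : topologicalType) (mul : T -> T -> T) (inv : T -> T)
  (e : T) :
  is_topological_group mul inv e -> (alpha1_5 T <-> alpha1 T).
Proof.
by move=> hG; split; [exact: alpha1_5_alpha1 hG | exact: alpha1_alpha1_5].
Qed.
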